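(* Let $n\geq 1$ and let $C$ be a $2$-null CRC in $G_n$ with covering radius $\rho\geq 2$, $c_1=1$ and $c_2=2$. Then there is a CRC $D$ in the binary Hamming graph $H(2n,2)$ with the same parameter matrix as $C$ such that $C=\{x\in\mathbb{Z}^n: (\tau(x_1 \bmod 4),\ldots,\tau(x_n\bmod 4))\in D\}$. In particular, $C$ is invariant under translation by $4e_i$ for every $i$.
   Context: $G_n$ is the graph with vertex set $\mathbb{Z}^n$, $x\sim y$ iff $\sum_i|x_i-y_i|=1$; $e_i$ is the $i$-th unit vector. For a code $C$ with covering radius $\rho=\max_v d(v,C)$, $C_i=\{v:d(v,C)=i\}$. $C$ is a completely regular code (CRC) if for all $i,j$ every vertex of $C_i$ has the same number $\alpha_{ij}$ of neighbours in $C_j$, with $\alpha_{ij}=0$ for $|i-j|>1$; $a_i=\alpha_{ii}$, $b_i=\alpha_{i,i+1}$, $c_i=\alpha_{i,i-1}$, and the parameter matrix is $(\alpha_{ij})$. $C$ is $r$-null if $a_0=\cdots=a_{r-1}=0$. The same notions apply in any graph, e.g. in the Hamming graph $H(2n,2)$ on $\{0,1\}^{2n}$ (adjacent iff differing in exactly one coordinate). $\tau:\{0,1,2,3\}\to\{0,1\}^2$ is the Gray map $\tau(0)=(00)$, $\tau(1)=(10)$, $\tau(2)=(11)$, $\tau(3)=(01)$, and $(\tau(y_1),\ldots,\tau(y_n))$ denotes the concatenation in $\{0,1\}^{2n}$. *)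

From HB Require Import structures.
From mathcomp Require Import all_boot all_order all_algebra.
Set Implicit Arguments. Unset Strict Implicit. Unset Printing Implicit Defensive.
Import Order.TTheory GRing.Theory Num.Theory.

Section Generic.
Variable V : eqType.
Variable adj : rel V.

Definition walk (x y : V) (k : nat) : Prop :=
  exists p : seq V, [/\ size p = k, path adj x p & last x p = y].

Definition dist_to (C : V -> Prop) (v : V) (i : nat) : Prop :=
  (exists c, C c /\ walk v c i) /\
  (forall c j, C c -> walk v c j -> i <= j).

Definition covering_radius (C : V -> Prop) (rho : nat) : Prop :=
  (forall v, exists i, i <= rho /\ dist_to C v i) /\
  (exists v, dist_to C v rho).

Definition has_count (P : V -> Prop) (a : nat) : Prop :=
  exists s : seq V, [/\ uniq s, size s = a & forall y, y \in s <-> P y].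

Definition CRC_with (C : V -> Prop) (rho : nat) (alpha : nat -> nat -> nat) : Prop :=
  [/\ covering_radius C rho,
      (forall i j v, i <= rho -> j <= rho -> dist_to C v i ->
         has_count (fun y => adj v y /\ dist_to C y j) (alpha i j)) &
      (forall i j, i <= rho -> j <= rho -> (i.+1 < j \/ j.+1 < i) -> alpha i j = 0)].

End Generic.

Definition Zvec (n : nat) := {ffun 'I_n -> int}.

Definition Gadj (n : nat) : rel (Zvec n) :=
  fun x y => (\sum_(i < n) absz (x i - y i)%R)%N == 1%N.

Definition shift4 (n : nat) (i : 'I_n) (x : Zvec n) : Zvec n :=
  [ffun j => (x j + (if j == i then 4 else 0))%R].

Definition Bvec (m : nat) := {ffun 'I_m -> bool}.

Definition Hadj (m : nat) : rel (Bvec m) :=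
  fun x y => #|[pred k | x k != y k]| == 1%N.

(* tau(0)=(00), tau(1)=(10), tau(2)=(11), tau(3)=(01), applied to z mod 4 *)
Definition tau (z : int) : bool * bool :=
  let m := absz (z %% 4)%Z in ((m == 1%N) || (m == 2%N), (m == 2%N) || (m == 3%N)).

Lemma half_ord_proof (n : nat) (k : 'I_(2 * n)) : k %/ 2 < n.
Proof. by rewrite ltn_divLR // [n * 2]mulnC ltn_ord. Qed.

Definition half_ord (n : nat) (k : 'I_(2 * n)) : 'I_n := Ordinal (half_ord_proof k).

(* (tau(x_1 mod 4), ..., tau(x_n mod 4)) in {0,1}^{2n}: coordinates 2i, 2i+1
   (0-based) hold the two bits of tau(x_i mod 4) *)
Definition gray (n : nat) (x : Zvec n) : Bvec (2 * n) :=
  [ffun k : 'I_(2 * n) =>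
     let t := tau (x (half_ord k)) in if odd k then t.2 else t.1].

(* If c is a codeword and s = +-1, then c + s e_i is at distance 1 with c as its only
   codeword neighbour, so c + 2s e_i is at distance 2.  Of its two neighbours at
   distance 1, one is c + s e_i; the other must lie on the same axis, since an off-axis
   one, c + 2s e_i + t e_k, would give c + s e_i + t e_k three neighbours at distance 1.
   Hence c + 3s e_i is at distance 1, and its codeword neighbour can only be c + 4s e_i.
   So C is invariant under 4e_i, i.e. a union of fibres of the Gray map.  The Gray map
   is surjective and maps the neighbourhood of every x bijectively onto that of its
   image, because a step +-1 modulo 4 is a single bit flip of the Gray code; such a
   covering map carries distances to a union of fibres, and hence complete regularity
   with its parameters, over to the image code. *)

From Pilot Require Import Defs.
From mathcomp Require Import all_boot all_order all_algebra zify.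
Import Order.TTheory GRing.Theory Num.Theory.
Set Implicit Arguments. Unset Strict Implicit. Unset Printing Implicit Defensive.

Section HasCount.
Variables (V : eqType) (P : V -> Prop).

Lemma has_count0 y : Defs.has_count P 0 -> ~ P y.
Proof. by move=> [[|? ?] [_ // _ hP]] /hP. Qed.

Lemma has_count1_ex : Defs.has_count P 1 -> exists y, P y.
Proof. by move=> [[|y [|? ?]] [_ // _ hP]]; exists y; apply/hP; exact: mem_head. Qed.

Lemma has_count1_eq y y' : Defs.has_count P 1 -> P y -> P y' -> y = y'.
Proof.
by move=> [[|z [|? ?]] [_ // _ hP]] /hP; rewrite inE => /eqP -> /hP; rewrite inE => /eqP.
Qed.

Lemma has_count2_other y : Defs.has_count P 2 -> P y -> exists2 y', P y' & y' <> y.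
Proof.
move=> [[|z1 [|z2 [|? ?]]] [/= + // _ hP]]; rewrite inE andbT => z12 /hP.
rewrite !inE => /orP[] /eqP ->.
- by exists z2; [apply/hP; rewrite !inE eqxx orbT | move=> e; rewrite e eqxx in z12].
- by exists z1; [apply/hP; exact: mem_head | move=> e; rewrite e eqxx in z12].
Qed.

Lemma has_count2_no_triple y1 y2 y3 : Defs.has_count P 2 -> P y1 -> P y2 -> P y3 ->
  y1 <> y2 -> y1 <> y3 -> y2 <> y3 -> False.
Proof.
move=> [[|z1 [|z2 [|? ?]]] [_ // _ hP]] /hP + /hP + /hP; rewrite !inE.
by do 3!case/orP=> /eqP ->.
Qed.

End HasCount.

Section Distance.
Variables (V : eqType) (adj : rel V) (C : V -> Prop).
Local Notation dist := (dist_to adj C).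

Lemma dist_to_code0 c : C c -> dist c 0.
Proof. by move=> hc; split=> //; exists c; split=> //; exists [::]. Qed.

Lemma dist_to0_code v : dist v 0 -> C v.
Proof. by move=> [[c [hc [[|? ?] [//= _ _ ->]]]] _]. Qed.

Lemma dist_to_adj_le v y d e : adj v y -> dist y d -> dist v e -> e <= d.+1.
Proof.
move=> hvy [[c [hc [p [hs hp hl]]]] _] [_ hmin]; apply: (hmin c) => //.
by exists (y :: p); split; rewrite /= ?hs ?hvy.
Qed.

End Distance.

Section CoveringMap.
Variables (V W : eqType) (adjV : rel V) (adjW : rel W) (f : V -> W).
Hypothesis f_surj : forall w, exists v, f v = w.
Hypothesis f_adj : forall x y, adjV x y -> adjW (f x) (f y).
Hypothesis f_lift_adj : forall x w, adjW (f x) w -> exists2 y, adjV x y & f y = w.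
Hypothesis f_inj_nbhd : forall x y y', adjV x y -> adjV x y' -> f y = f y' -> y = y'.

Lemma walk_map x y k : walk adjV x y k -> walk adjW (f x) (f y) k.
Proof.
move=> [p [<- hp <-]]; exists (map f p); rewrite size_map last_map; split=> //.
by elim: p x hp => //= z p IH x /andP[hxz /IH ->]; rewrite f_adj.
Qed.

Lemma walk_lift x w k : walk adjW (f x) w k -> exists2 y, f y = w & walk adjV x y k.
Proof.
move=> [p [<- hp <-]]; elim: p x hp => [|v p IH] x /=; first by exists x => //; exists [::].
case/andP=> /f_lift_adj[y hxy <-] /IH[z <- [q [hq hpq hlq]]].
by exists z => //; exists (y :: q); rewrite /= hxy hq.
Qed.

Variable C : V -> Prop.
Hypothesis C_fibred : forall x y, f x = f y -> C x -> C y.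

Definition image_code (w : W) : Prop := exists2 x, f x = w & C x.

Lemma image_codeE x : image_code (f x) <-> C x.
Proof. by split=> [[y /C_fibred]|]; [apply | exists x]. Qed.

Lemma dist_to_image x i : dist_to adjW image_code (f x) i <-> dist_to adjV C x i.
Proof.
split=> [[[w [[c <- hc] /walk_lift[y hcy hxy]]] hmin]|[[c [hc hxc]] hmin]]; split.
- by exists y; split=> //; apply: C_fibred hc.
- by move=> c' j /image_codeE hc' /walk_map; apply: hmin.
- by exists (f c); split; [exact/image_codeE | exact: walk_map].
- move=> w j [c' <- hc'] /walk_lift[y hy hxy]; apply: hmin hxy.
  by apply: C_fibred hc'; rewrite hy.
Qed.

Lemma has_count_image x j a :
  Defs.has_count (fun y => adjV x y /\ dist_to adjV C y j) a ->
  Defs.has_count (fun w => adjW (f x) w /\ dist_to adjW image_code w j) a.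
Proof.
move=> [s [s_uniq <- hs]]; exists (map f s); rewrite size_map; split=> //.
  rewrite map_inj_in_uniq // => y y' /hs[hy _] /hs[hy' _]; exact: (f_inj_nbhd hy hy').
move=> w; split=> [/mapP[y /hs[hxy hy] ->]|[/f_lift_adj[y hxy <-]]].
  by split; [exact: f_adj | exact/dist_to_image].
by move/dist_to_image=> hy; apply: map_f; apply/hs.
Qed.

Lemma CRC_with_image rho alpha :
  CRC_with adjV C rho alpha -> CRC_with adjW image_code rho alpha.
Proof.
case=> [[hcov [x hx]] hcount hband]; split=> //.
- split; last by exists (f x); exact/dist_to_image.
  move=> w; have [y <-] := f_surj w; have [i [hi hyi]] := hcov y.
  by exists i; split=> //; exact/dist_to_image.
- move=> i j w hi hj; have [y <-] := f_surj w.
  by move/dist_to_image=> hyi; apply: has_count_image; apply: hcount.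
Qed.

End CoveringMap.

Section TwoNullCRC.
Variables (V : eqType) (adj : rel V) (C : V -> Prop).
Variables (rho : nat) (alpha : nat -> nat -> nat).
Hypothesis adj_sym : symmetric adj.
Hypothesis C_crc : CRC_with adj C rho alpha.
Hypothesis rho_ge2 : 2 <= rho.
Hypotheses (a0 : alpha 0 0 = 0) (a1 : alpha 1 1 = 0).
Hypotheses (c1 : alpha 1 0 = 1) (c2 : alpha 2 1 = 2).
Local Notation dist := (dist_to adj C).

Let rho_ge1 : 1 <= rho. Proof. exact: ltnW. Qed.

Lemma dist_to_bound v : exists2 i, i <= rho & dist v i.
Proof. by case: C_crc => [[hcov _] _ _]; have [i []] := hcov v; exists i. Qed.

Lemma crc_nbr_count i j v : i <= rho -> j <= rho -> dist v i ->
  Defs.has_count (fun y => adj v y /\ dist y j) (alpha i j).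
Proof. by case: C_crc => _ hcount _; apply: hcount. Qed.

Lemma code_nbr_dist1 c y : C c -> adj c y -> dist y 1.
Proof.
move=> hc hcy; have [d _ hyd] := dist_to_bound y.
have : d <= 1 by apply: dist_to_adj_le (dist_to_code0 adj hc) hyd; rewrite adj_sym.
case: d hyd => [/dist_to0_code hy _|[//|//]].
have := crc_nbr_count (leq0n _) (leq0n _) (dist_to_code0 adj hc); rewrite a0.
by move/(has_count0 (y := y)); case; split=> //; apply: (dist_to_code0 adj).
Qed.

Lemma dist1_code_nbr y : dist y 1 -> exists2 c, adj y c & C c.
Proof.
move/(crc_nbr_count (j := 0) rho_ge1 (leq0n _)); rewrite c1.
by case/has_count1_ex=> c [hyc /dist_to0_code]; exists c.
Qed.

Lemma dist1_code_nbr_unique y c c' :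
  dist y 1 -> adj y c -> adj y c' -> C c -> C c' -> c = c'.
Proof.
move/(crc_nbr_count (j := 0) rho_ge1 (leq0n _)); rewrite c1 => hy hyc hyc' hc hc'.
by apply: (has_count1_eq hy); split=> //; apply: (dist_to_code0 adj).
Qed.

Lemma dist1_nbr_not_dist1 y z : dist y 1 -> adj y z -> ~ dist z 1.
Proof.
move/(crc_nbr_count (j := 1) rho_ge1 rho_ge1); rewrite a1 => hy hyz hz.
exact: has_count0 hy (conj hyz hz).
Qed.

Lemma dist1_nbr_dist2 y v : dist y 1 -> adj y v -> ~ C v -> dist v 2.
Proof.
move=> hy hyv hv; have [d _ hvd] := dist_to_bound v.
have : d <= 2 by apply: dist_to_adj_le hy hvd; rewrite adj_sym.
case: d hvd => [/dist_to0_code //|[hvd _|[//|//]]].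
by case: (dist1_nbr_not_dist1 hy hyv hvd).
Qed.

Lemma dist2_count_dist1 v : dist v 2 -> Defs.has_count (fun y => adj v y /\ dist y 1) 2.
Proof. by move/(crc_nbr_count (j := 1) rho_ge2 rho_ge1); rewrite c2. Qed.

End TwoNullCRC.

Section Lattice.
Variable n : nat.
Implicit Types (x y : Zvec n) (k : 'I_n) (d : int).

Definition shift x k d : Zvec n := [ffun j => (x j + (if j == k then d else 0))%R].

Lemma shift4E k x : shift4 k x = shift x k 4. Proof. by []. Qed.

Lemma shift_shift x k a b : shift (shift x k a) k b = shift x k (a + b).
Proof. by apply/ffunP => j; rewrite !ffunE; case: (j == k); lia. Qed.

Lemma shift0 x k : shift x k 0 = x.
Proof. by apply/ffunP => j; rewrite ffunE; case: (j == k); rewrite addr0. Qed.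

Lemma shiftC x k a l b : shift (shift x k a) l b = shift (shift x l b) k a.
Proof. by apply/ffunP => j; rewrite !ffunE; case: (j == k); case: (j == l); lia. Qed.

Lemma neq_at x y j : x j != y j -> x <> y.
Proof. by move=> + exy; rewrite exy eqxx. Qed.

Lemma Gadj_sym : symmetric (@Gadj n).
Proof. by move=> x y; rewrite /Gadj; congr (_ == _); apply: eq_bigr => i _; lia. Qed.

Lemma Gadj_shift x k d : absz d = 1 -> Gadj x (shift x k d).
Proof.
move=> hd; rewrite /Gadj (bigD1 k) //= big1 => [|j /negbTE hj]; rewrite ffunE ?eqxx ?hj.
  by apply/eqP; lia.
by rewrite addr0 subrr.
Qed.

Lemma Gadj_shift_back x k d : absz d = 1 -> Gadj (shift x k d) x.
Proof. by move=> hd; rewrite Gadj_sym Gadj_shift. Qed.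

Lemma GadjP x y : Gadj x y -> exists k d, absz d = 1 /\ y = shift x k d.
Proof.
rewrite /Gadj => /eqP hs.
have [k hk] : exists k, absz (x k - y k)%R != 0.
  case: (pickP (fun k => absz (x k - y k)%R != 0)) => [k hk|h0]; first by exists k.
  by move: hs; rewrite big1 // => j _; apply/eqP/negbFE/h0.
move: hs; rewrite (bigD1 k) //=; set rest := (\sum_(j | _) _)%N => hs.
have hrest : rest = 0 by lia.
exists k, (y k - x k)%R; split; first by lia.
apply/ffunP => j; rewrite ffunE; case: (eqVneq j k) => [->|hj]; first by rewrite addrC subrK.
by move: hrest; rewrite /rest (bigD1 j) //=; lia.
Qed.

End Lattice.

Section Periodicity.
Variables (n : nat) (C : Zvec n -> Prop) (rho : nat) (alpha : nat -> nat -> nat).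
Hypothesis C_crc : CRC_with (@Gadj n) C rho alpha.
Hypothesis rho_ge2 : 2 <= rho.
Hypotheses (a0 : alpha 0 0 = 0) (a1 : alpha 1 1 = 0).
Hypotheses (c1 : alpha 1 0 = 1) (c2 : alpha 2 1 = 2).
Local Notation dist := (dist_to (@Gadj n) C).

Local Notation nbr_code_dist1 := (code_nbr_dist1 (@Gadj_sym n) C_crc a0).
Local Notation dist1_unique := (dist1_code_nbr_unique C_crc rho_ge2 c1).
Local Notation dist1_nbr_noncode_dist2 := (dist1_nbr_dist2 (@Gadj_sym n) C_crc rho_ge2 a1).
Local Notation dist2_count := (dist2_count_dist1 C_crc rho_ge2 c2).

Lemma off_axis_not_dist1 c i s k t : C c -> absz s = 1 -> absz t = 1 -> k != i ->
  ~ dist (shift (shift (shift c i s) i s) k t) 1.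
Proof.
move=> hc hs ht hki; set y1 := shift c i s; set v := shift y1 k t => hu.
have hik : (i == k) = false by rewrite eq_sym (negbTE hki).
have y1_dist1 : dist y1 1 := nbr_code_dist1 hc (Gadj_shift c i hs).
have y1_v : Gadj y1 v := Gadj_shift y1 k ht.
have v_dist2 : dist v 2.
  apply: (dist1_nbr_noncode_dist2 y1_dist1 y1_v) => hv.
  have := dist1_unique y1_dist1 (Gadj_shift_back c i hs) y1_v hc hv.
  by apply: (neq_at (j := k)); rewrite !ffunE eqxx (negbTE hki); lia.
have ck_dist1 : dist (shift c k t) 1 := nbr_code_dist1 hc (Gadj_shift c k ht).
apply: (has_count2_no_triple (dist2_count v_dist2)
  (conj _ y1_dist1) (conj _ ck_dist1) (conj _ hu)).
- exact: Gadj_shift_back.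
- by rewrite /v /y1 shiftC Gadj_shift_back.
- by rewrite /v [shift (shift y1 i s) k t]shiftC Gadj_shift.
all: by apply: (neq_at (j := i)); rewrite !ffunE eqxx hik; lia.
Qed.

Lemma code_shift4 c i s : absz s = 1 -> C c -> C (shift c i (4 * s)%R).
Proof.
move=> hs hc; set y1 := shift c i s; set y2 := shift y1 i s.
have y1_dist1 : dist y1 1 := nbr_code_dist1 hc (Gadj_shift c i hs).
have y1_y2 : Gadj y1 y2 := Gadj_shift y1 i hs.
have y2_noncode : ~ C y2.
  move=> hy2; have := dist1_unique y1_dist1 (Gadj_shift_back c i hs) y1_y2 hc hy2.
  by apply: (neq_at (j := i)); rewrite !ffunE eqxx; lia.
have y2_dist2 : dist y2 2 := dist1_nbr_noncode_dist2 y1_dist1 y1_y2 y2_noncode.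
have [u [y2_u u_dist1] u_ne] :=
  has_count2_other (dist2_count y2_dist2) (conj (Gadj_shift_back y1 i hs) y1_dist1).
have [k [t [ht u_def]]] := GadjP y2_u; subst u.
have [eki|nki] := eqVneq k i; last by case: (off_axis_not_dist1 hc hs ht nki u_dist1).
subst k; have : t = s \/ t = (- s)%R by lia.
case=> ets; subst t; last by case: u_ne; rewrite /y2 shift_shift addrN shift0.
set y3 := shift y2 i s in u_dist1.
have [c' y3_c' hc'] := dist1_code_nbr C_crc rho_ge2 c1 u_dist1.
have [k [t [ht' c'_def]]] := GadjP y3_c'; subst c'.
have [eki|nki] := eqVneq k i.
- subst k; have : t = s \/ t = (- s)%R by lia.
  case=> ets; move: hc'; rewrite ets; last by rewrite /y3 shift_shift addrN shift0 => /y2_noncode.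
  by rewrite /y3 /y2 /y1 !shift_shift (_ : (s + (s + (s + s)) = 4 * s)%R) //; lia.
- case: (off_axis_not_dist1 hc hs ht' nki); apply: nbr_code_dist1 hc' _.
  by rewrite /y3 shiftC Gadj_shift_back.
Qed.

Lemma code_shift_mul4 c i m : C c -> C (shift c i (4 * m)%R).
Proof.
have shift_nat s (p : nat) x : absz s = 1 -> C x -> C (shift x i (4 * (s * p%:Z))%R).
  move=> hs; elim: p x => [|p IH] x hx; first by rewrite mulr0 mulr0 shift0.
  rewrite (_ : 4 * (s * p.+1%:Z) = 4 * (s * p%:Z) + 4 * s)%R; last by lia.
  by rewrite -shift_shift; apply: code_shift4 => //; apply: IH.
move=> hc; case: m => p.
  by have := shift_nat 1 p c erefl hc; rewrite mul1r.
by have := shift_nat (-1)%R p.+1 c erefl hc; rewrite NegzE mulN1r.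
Qed.

Lemma code_mod4_congr (x y : Zvec n) : (forall j, (x j %% 4)%Z = (y j %% 4)%Z) -> C x -> C y.
Proof.
suff agree_off (r : seq 'I_n) (x' : Zvec n) : (forall j, (x' j %% 4)%Z = (y j %% 4)%Z) ->
    (forall j, j \notin r -> x' j = y j) -> C x' -> C y.
  by move=> hxy; apply: (agree_off (enum 'I_n)) => // j; rewrite mem_enum.
elim: r x' => [|k r IH] x' hmod hoff hx'.
  by have <- : x' = y by apply/ffunP => j; rewrite hoff.
have [m hm] : exists m, (y k - x' k = 4 * m)%R.
  by exists ((y k - x' k) %/ 4)%Z; have := hmod k; lia.
apply: (IH (shift x' k (y k - x' k)%R)); last by rewrite hm; exact: code_shift_mul4.
- move=> j; rewrite ffunE; case: (eqVneq j k) => [->|_]; last by rewrite addr0.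
  by rewrite addrC subrK.
- move=> j hj; rewrite ffunE; case: (eqVneq j k) => [->|hjk]; first by rewrite addrC subrK.
  by rewrite addr0 hoff // inE negb_or hjk.
Qed.

End Periodicity.

Section Hamming.
Variable m : nat.
Implicit Types (v w : Bvec m) (k : 'I_m).

Definition flip v k : Bvec m := [ffun j => (j == k) (+) v j].

Lemma Hadj_flip v k : Hadj v (flip v k).
Proof. by rewrite /Hadj (@eq_card1 _ k) // => j; rewrite !inE ffunE; case: (j == k) (v j) => [] []. Qed.

Lemma HadjP v w : Hadj v w -> exists k, w = flip v k.
Proof.
move/eqP/mem_card1=> [k hk]; exists k; apply/ffunP=> j; rewrite ffunE.
by have := hk j; rewrite !inE; case: (j == k) (v j) (w j) => [] [] [].
Qed.

Lemma flip_inj v : injective (flip v).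
Proof.
move=> k k' /ffunP/(_ k); rewrite !ffunE eqxx.
by case: (eqVneq k k') => // _; case: (v k).
Qed.

End Hamming.

Definition mod4 (z : int) : nat := absz (z %% 4)%Z.

Definition gray_pair (r : nat) : bool * bool := ((r == 1) || (r == 2), (r == 2) || (r == 3)).

Lemma tauE z : tau z = gray_pair (mod4 z). Proof. by []. Qed.

Lemma mod4_lt4 z : mod4 z < 4. Proof. rewrite /mod4; lia. Qed.

Lemma mod4D1 z : mod4 (z + 1) = (mod4 z).+1 %% 4. Proof. rewrite /mod4; lia. Qed.

Lemma mod4B1 z : mod4 (z - 1) = (mod4 z + 3) %% 4. Proof. rewrite /mod4; lia. Qed.

Lemma gray_pair_inj : {in gtn 4 &, injective gray_pair}.
Proof. by move=> [|[|[|[|r]]]] [|[|[|[|r']]]]. Qed.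

Section GrayMap.
Variable n : nat.
Implicit Types (x y : Zvec n) (k : 'I_n).

Lemma bit_ord_proof k (b : bool) : 2 * k + b < 2 * n.
Proof. by have := ltn_ord k; case: b => /=; lia. Qed.

Definition bit_ord k (b : bool) : 'I_(2 * n) := Ordinal (bit_ord_proof k b).

Lemma half_bit_ord k b : half_ord (bit_ord k b) = k.
Proof. by apply/val_inj => /=; case: b => /=; lia. Qed.

Lemma odd_bit_ord k b : odd (bit_ord k b) = b.
Proof. by rewrite /= oddD oddM /=; case: b. Qed.

Lemma bit_ord_half (j : 'I_(2 * n)) : bit_ord (half_ord j) (odd j) = j.
Proof.
apply/val_inj => /=; have := odd_double_half j.
by rewrite -divn2; case: (odd j) => /=; lia.
Qed.

Lemma bit_ord_inj k b k' b' : bit_ord k b = bit_ord k' b' -> k = k' /\ b = b'.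
Proof.
move=> e; split; first by rewrite -(half_bit_ord k b) e half_bit_ord.
by rewrite -(odd_bit_ord k b) e odd_bit_ord.
Qed.

Lemma eq_bit_ord k b b' : (bit_ord k b == bit_ord k b') = (b == b').
Proof. by apply/eqP/eqP => [/bit_ord_inj[]|->]. Qed.

Lemma gray_bit_ord x k b : gray x (bit_ord k b) = if b then (tau (x k)).2 else (tau (x k)).1.
Proof. by rewrite ffunE half_bit_ord odd_bit_ord. Qed.

Lemma gray_mod4 x y : gray x = gray y -> forall j, (x j %% 4)%Z = (y j %% 4)%Z.
Proof.
move=> e j; have e1 := congr1 (fun v : Bvec (2 * n) => v (bit_ord j false)) e.
have e2 := congr1 (fun v : Bvec (2 * n) => v (bit_ord j true)) e.
rewrite /= !gray_bit_ord !tauE in e1 e2.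
have : mod4 (x j) = mod4 (y j).
  by apply: gray_pair_inj; rewrite ?inE ?mod4_lt4 // [LHS]surjective_pairing e1 e2 -surjective_pairing.
rewrite /mod4; lia.
Qed.

(* From residue r, the step +1 flips bit [odd r] of the Gray code and the step -1 the
   other bit. *)
Lemma gray_shift x k d : absz d = 1 ->
  gray (shift x k d) = flip (gray x) (bit_ord k (odd (mod4 (x k)) (+) (d != 1%R))).
Proof.
move=> hd; apply/ffunP => j; rewrite -(bit_ord_half j) !ffunE !half_bit_ord !odd_bit_ord.
move: (half_ord j) (odd j) => h b; case: (eqVneq h k) => [->|hk]; last first.
  rewrite addr0 (_ : (bit_ord h b == _) = false) //.
  by apply/eqP => /bit_ord_inj[ehk _]; rewrite ehk eqxx in hk.
rewrite eq_bit_ord !tauE; have : d = 1%R \/ d = (-1)%R by lia.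
by case=> ->; rewrite ?mod4D1 ?mod4B1 /=; have := mod4_lt4 (x k);
  case: (mod4 (x k)) => [|[|[|[|]]]] //= _; case: b.
Qed.

Lemma gray_adj x y : Gadj x y -> Hadj (gray x) (gray y).
Proof. by case/GadjP=> k [d [hd ->]]; rewrite gray_shift //; apply: Hadj_flip. Qed.

Lemma gray_lift_adj x w : Hadj (gray x) w -> exists2 y, Gadj x y & gray y = w.
Proof.
case/HadjP=> j ->; set k := half_ord j.
pose d : int := if odd (mod4 (x k)) == odd j then 1%R else (-1)%R.
have hd : absz d = 1 by rewrite /d; case: eqP.
exists (shift x k d); first exact: Gadj_shift.
rewrite gray_shift // -[in RHS](bit_ord_half j) /d.
by case: (odd (mod4 _)); case: (odd j).
Qed.

Lemma gray_inj_nbhd x y y' : Gadj x y -> Gadj x y' -> gray y = gray y' -> y = y'.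
Proof.
case/GadjP=> k [d [hd ->]] /GadjP[k' [d' [hd' ->]]].
rewrite !gray_shift // => /flip_inj/bit_ord_inj[<-] /addbI.
have [->|d_n1] := eqVneq d 1%R; have [->|d'_n1] := eqVneq d' 1%R => //= _.
by have -> : d = d' by lia.
Qed.

Lemma gray_surj w : exists x, gray x = w.
Proof.
pose digit (p : bool * bool) : int :=
  match p with (false, false) => 0%R | (true, false) => 1%R | (true, true) => 2%R | (false, true) => 3%R end.
exists [ffun k => digit (w (bit_ord k false), w (bit_ord k true))].
apply/ffunP => j; rewrite -(bit_ord_half j) gray_bit_ord ffunE.
by case: (odd j); case: (w (bit_ord _ false)); case: (w (bit_ord _ true)).
Qed.

End GrayMap.

Theorem mainTheorem2 (n : nat) (C : Zvec n -> Prop) (rho : nat)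
    (alpha : nat -> nat -> nat) :
  1 <= n ->
  CRC_with (@Gadj n) C rho alpha ->
  2 <= rho ->
  alpha 0 0 = 0 -> alpha 1 1 = 0 ->       (* 2-null: a_0 = a_1 = 0 *)
  alpha 1 0 = 1 ->                        (* c_1 = 1 *)
  alpha 2 1 = 2 ->                        (* c_2 = 2 *)
  (exists D : Bvec (2 * n) -> Prop,
      CRC_with (@Hadj (2 * n)) D rho alpha /\
      (forall x : Zvec n, C x <-> D (gray x))) /\
  (forall (i : 'I_n) (x : Zvec n), C (shift4 i x) <-> C x).
Proof.
move=> _ C_crc rho_ge2 a0 a1 c1 c2.
have C_shift_mul4 := code_shift_mul4 C_crc rho_ge2 a0 a1 c1 c2.
have C_fibred x y : gray x = gray y -> C x -> C y.
  by move/gray_mod4; apply: (code_mod4_congr C_crc rho_ge2 a0 a1 c1 c2).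
split.
  exists (image_code (@gray n) C); split; last by move=> x; rewrite (image_codeE C_fibred).
  exact: (CRC_with_image (@gray_surj n) (@gray_adj n) (@gray_lift_adj n) (@gray_inj_nbhd n)
                         C_fibred C_crc).
move=> i x; rewrite shift4E; split=> [|hx].
  by move/(C_shift_mul4 _ i (-1)%R); rewrite shift_shift mulrN1 addrN shift0.
by have := C_shift_mul4 x i 1%R hx; rewrite mulr1.
Qed.
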